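(* Let $\gamma$ be an $\mathbb{F}$-functorial and let $\mathfrak{F}(\gamma)$ be the class of all finite groups $G$ with $\gamma(G)=G$. Then $\mathfrak{F}(\gamma)=\mathfrak{F}(\gamma^\infty)$, $\mathfrak{F}(\gamma)$ is closed under homomorphic images and $N_0$-closed, and $G_{\mathfrak{F}(\gamma)}=\gamma^\infty(G)$ for every group $G$.
   Context: All groups are finite. A functorial is a function $\theta$ assigning to each group $G$ a characteristic subgroup $\theta(G)$ such that $f(\theta(G))=\theta(f(G))$ for every isomorphism $f:G\to G^*$. An $\mathbb{F}$-functorial is a functorial $\gamma$ satisfying, for every group $G$: (F1) $f(\gamma(G))\subseteq\gamma(f(G))$ for every epimorphism $f:G\to G^*$; (F2) $\gamma(N)\subseteq\gamma(G)$ for every $N\trianglelefteq G$; (F3) $C_G(\gamma(G))\subseteq\gamma(G)$; (F4) $\gamma(G)/\Phi(G)\subseteq\mathrm{Soc}(G/\Phi(G))$. $\gamma^{(1)}=\gamma$, $\gamma^{(i+1)}(G)=\gamma(\gamma^{(i)}(G))$, $\gamma^\infty(G)=\bigcap_i\gamma^{(i)}(G)$. A class $\mathfrak{X}$ is $N_0$-closed if $G=NM$ with $N,M$ normal $\mathfrak{X}$-subgroups of $G$ implies $G\in\mathfrak{X}$. For an $N_0$-closed class $\mathfrak{X}$ containing $1$, $G_\mathfrak{X}=\langle H\trianglelefteq G\mid H\in\mathfrak{X}\rangle$ is the largest normal $\mathfrak{X}$-subgroup of $G$. *)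

From mathcomp Require Import boolp.
From mathcomp Require Import all_boot all_fingroup all_solvable.
Set Implicit Arguments.
Unset Strict Implicit.
Unset Printing Implicit Defensive.
Import GroupScope.
Local Open Scope group_scope.

Notation gmap := GFunctor.object_map.

Definition socle (gT : finGroupType) (G : {set gT}) : {set gT} :=
  <<\bigcup_(M : {group gT} | (M \subset G) && minnormal M G) M>>.

Definition functorial (th : gmap) : Prop :=
  (forall (gT : finGroupType) (G : {group gT}), group_set (th gT G)) /\
  (forall (gT : finGroupType) (G : {group gT}), th gT G \char G) /\
  (forall (gT rT : finGroupType) (G : {group gT}) (f : {morphism G >-> rT}),
      'injm f -> f @* (th gT G) = th rT (f @* G)).

Definition F_functorial (ga : gmap) : Prop :=
  functorial ga /\
  (forall (gT rT : finGroupType) (G : {group gT}) (f : {morphism G >-> rT}),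
      f @* (ga gT G) \subset ga rT (f @* G)) /\
  (forall (gT : finGroupType) (G N : {group gT}),
      N <| G -> ga gT N \subset ga gT G) /\
  (forall (gT : finGroupType) (G : {group gT}),
      'C_G(ga gT G) \subset ga gT G) /\
  (forall (gT : finGroupType) (G : {group gT}),
      ga gT G / 'Phi(G) \subset socle (G / 'Phi(G))).

Definition giter (ga : gmap) (i : nat) : gmap := fun gT A => iter i (ga gT) A.

Definition ginf (ga : gmap) : gmap := fun gT A =>
  [set x : gT | `[< forall i : nat, x \in giter ga i.+1 A >]].

Definition gclass := forall gT : finGroupType, {group gT} -> bool.

Definition fixclass (th : gmap) : gclass := fun gT G => th gT G == G.

Definition hom_closed (X : gclass) : Prop :=
  forall (gT rT : finGroupType) (G : {group gT}) (f : {morphism G >-> rT}),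
    X gT G -> X rT (f @* G)%G.

Definition N0_closed (X : gclass) : Prop :=
  forall (gT : finGroupType) (G N M : {group gT}),
    N <| G -> M <| G -> G :=: N * M -> X gT N -> X gT M -> X gT G.

Definition Xradical (X : gclass) (gT : finGroupType) (G : {set gT}) : {set gT} :=
  <<\bigcup_(H : {group gT} | (H <| G) && X gT H) H>>.

From mathcomp Require Import boolp.
From mathcomp Require Import all_boot all_fingroup all_solvable.
Import GroupScope.
Local Open Scope group_scope.

(* As gamma(G) is characteristic in G, the chain G >= gamma(G) >= gamma^(2)(G)
   >= ... is a descending chain of characteristic subgroups; being finite it
   becomes constant, and its limit gamma^infty(G) is a characteristic subgroup
   fixed by gamma.  By (F2) every normal subgroup H of G with gamma(H) = H
   stays inside every term of the chain, so gamma^infty(G) is the largest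
   normal subgroup of G in F(gamma).  (F1) gives closure under images, and
   (F2) gives N0-closure: N M = gamma(N) gamma(M) <= gamma(N M). *)

Lemma subset_chain_stable (T : finType) (A : nat -> {set T}) :
    {homo A : m n / m <= n >-> n \subset m} ->
  exists n, forall m, n <= m -> A m = A n.
Proof.
move=> leA; pose P k := `[< exists n, #|A n| = k >].
have : exists k, P k by exists #|A 0|; apply/asboolP; exists 0.
case/ex_minnP=> _ /asboolP[n <-] min_n; exists n => m le_nm.
by apply/eqP; rewrite eqEcard leA //=; apply: min_n; apply/asboolP; exists m.
Qed.

Section IteratedFunctor.

Variable ga : GFunctor.object_map.
Hypothesis ga_group_set : forall (gT : finGroupType) (G : {group gT}),
  group_set (ga gT G).
Hypothesis ga_char : forall (gT : finGroupType) (G : {group gT}),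
  ga gT G \char G.
Hypothesis ga_morphim : forall (gT rT : finGroupType) (G : {group gT})
  (f : {morphism G >-> rT}), f @* ga gT G \subset ga rT (f @* G).
Hypothesis ga_normal : forall (gT : finGroupType) (G N : {group gT}),
  N <| G -> ga gT N \subset ga gT G.

Canonical ga_group (gT : finGroupType) (G : {group gT}) :=
  Group (ga_group_set _ G).

Section OneGroup.

Variables (gT : finGroupType) (G : {group gT}).

Lemma giter_group_set i : group_set (giter ga i G).
Proof.
elim: i => [|i IH]; first exact: groupP.
exact: (ga_group_set _ (Group IH)).
Qed.

Canonical giter_group i := Group (giter_group_set i).

Lemma giterS i : giter ga i.+1 G = ga gT (giter ga i G).
Proof. by []. Qed.

Lemma giter_char i : giter ga i G \char G.
Proof.
elim: i => [|i IH]; first exact: char_refl.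
by rewrite giterS (char_trans (ga_char _ (giter_group i))).
Qed.

Lemma giter_sub : {homo (fun i => giter ga i G) : m n / m <= n >-> n \subset m}.
Proof.
apply: homo_leq => [H | H K L sKH sLK | i]; first exact: subxx.
  exact: subset_trans sLK sKH.
by rewrite giterS char_sub ?(ga_char _ (giter_group i)).
Qed.

Lemma ginfP x : reflect (forall i, x \in giter ga i.+1 G) (x \in ginf ga G).
Proof. by rewrite inE; apply: asboolP. Qed.

Lemma ginf_giter : exists2 n, ginf ga G = giter ga n G & ga gT (ginf ga G) = ginf ga G.
Proof.
have [n stable_n] := subset_chain_stable _ _ giter_sub.
have ginfE : ginf ga G = giter ga n G.
  apply/setP=> x; apply/ginfP/idP => [/(_ n) | xn i]; first by rewrite stable_n.
  have /subsetP-> // := giter_sub _ _ (leq_maxr n i.+1).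
  by rewrite stable_n ?leq_maxl.
by exists n; rewrite // ginfE -giterS stable_n.
Qed.

Lemma ginf_group_set : group_set (ginf ga G).
Proof. by have [n -> _] := ginf_giter; apply: groupP. Qed.

Canonical ginf_group := Group ginf_group_set.

Lemma ginf_char : ginf ga G \char G.
Proof. by have [n -> _] := ginf_giter; apply: giter_char. Qed.

Lemma ga_ginf : ga gT (ginf ga G) = ginf ga G.
Proof. by case: ginf_giter. Qed.

Lemma ginf_sub_ga : ginf ga G \subset ga gT G.
Proof. by apply/subsetP=> x /ginfP/(_ 0). Qed.

Lemma fixclass_ginf : fixclass ga G = fixclass (ginf ga) G.
Proof.
apply/eqP/eqP=> fixG; last first.
  by apply/eqP; rewrite eqEsubset char_sub ?ga_char //= -{1}fixG ginf_sub_ga.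
have giter_fixed i : giter ga i G = G by elim: i => //= i IH; rewrite IH.
by have [n -> _] := ginf_giter; apply: giter_fixed.
Qed.

Lemma normal_fixed_sub_ginf (H : {group gT}) :
  H <| G -> ga gT H = H -> H \subset ginf ga G.
Proof.
move=> nHG fixH; have [n -> _] := ginf_giter.
elim: n => [|i IH]; first exact: normal_sub.
by rewrite giterS -fixH ga_normal // (normalS IH (char_sub (giter_char i)) nHG).
Qed.

Lemma Xradical_fixclass : Xradical (fixclass ga) G = ginf ga G.
Proof.
apply/eqP; rewrite eqEsubset gen_subG; apply/andP; split.
  by apply/bigcupsP=> H /andP[nHG /eqP]; apply: normal_fixed_sub_ginf.
apply/sub_gen/(bigcup_sup ginf_group).
by rewrite char_normal ?ginf_char //=; apply/eqP/ga_ginf.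
Qed.

End OneGroup.

Lemma fixclass_hom_closed : hom_closed (fixclass ga).
Proof.
move=> gT rT G f /eqP fixG; apply/eqP/eqP.
rewrite eqEsubset char_sub ?ga_char //=.
by have := ga_morphim _ _ _ f; rewrite fixG.
Qed.

Lemma fixclass_N0_closed : N0_closed (fixclass ga).
Proof.
move=> gT G N M nNG nMG defG /eqP fixN /eqP fixM; apply/eqP/eqP.
rewrite eqEsubset char_sub ?ga_char //= {1}defG -fixN -fixM.
by rewrite mul_subG ?ga_normal.
Qed.

End IteratedFunctor.

Theorem proposition4 (ga : GFunctor.object_map) (Hga : F_functorial ga) :
  [/\ (forall (gT : finGroupType) (G : {group gT}),
          fixclass ga G = fixclass (ginf ga) G),
      hom_closed (fixclass ga),
      N0_closed (fixclass ga) &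
      (forall (gT : finGroupType) (G : {group gT}),
          Xradical (fixclass ga) G = ginf ga G)].
Proof.
have [[ga_group_set [ga_char _]] [ga_morphim [ga_normal _]]] := Hga.
split=> [gT G | | | gT G].
- exact: fixclass_ginf.
- exact: fixclass_hom_closed.
- exact: fixclass_N0_closed.
- exact: Xradical_fixclass.
Qed.
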